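(* For every $m$, the first $\varepsilon\tau$-theorem holds for $\varepsilon\tau(\mathbf{LC}_m)$.
   Context: $\mathbf{LC}_m$ is the intermediate propositional logic axiomatized over intuitionistic propositional logic by the schemas $\mathit{Lin}$: $(A\to B)\lor(B\to A)$ and $B_m$: $(A_1\to A_2)\lor(A_2\to A_3)\lor\dots\lor(A_m\to A_{m+1})$ (the $m$-valued Gödel logic). $\varepsilon\tau$-terms: $\varepsilon x\,A(x)$, $\tau x\,A(x)$ for formulas $A(x)$. Critical formulas: $A(t)\to A(\varepsilon x\,A(x))$ and $A(\tau x\,A(x))\to A(t)$. $\vdash_{\varepsilon\tau(\mathbf{L})}B$: $B$ derivable in the quantifier-free language with $\varepsilon\tau$-terms from critical formulas using substitution instances of theorems of $\mathbf{L}$ and modus ponens; $\vdash_{\mathbf{L}}$ is the same without critical formulas. $\varepsilon\tau(\mathbf{L})$ has the first $\varepsilon\tau$-theorem if whenever $\vdash_{\varepsilon\tau(\mathbf{L})}A(e_1,\dots,e_n)$ for $\varepsilon$- or $\tau$-terms $e_i$, there are $\varepsilon\tau$-free terms $t_i^j$ with $\vdash_{\mathbf{L}}A(t_1^1,\dots,t_n^1)\lor\dots\lor A(t_1^k,\dots,t_n^k)$. *)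

From mathcomp Require Import all_boot.
Set Implicit Arguments. Unset Strict Implicit. Unset Printing Implicit Defensive.

Inductive pform : Type :=
| pvar : nat -> pform
| pbot : pform
| pimp : pform -> pform -> pform
| pand : pform -> pform -> pform
| por  : pform -> pform -> pform.

(* chain_disj f j n = (f j -> f (j+1)) \/ ... \/ (f (j+n-1) -> f (j+n)),
   right-nested; for n >= 1. *)
Fixpoint chain_disj (f : nat -> pform) (j n : nat) : pform :=
  match n with
  | 0 => pbot
  | n'.+1 => if n' is 0 then pimp (f j) (f j.+1)
             else por (pimp (f j) (f j.+1)) (chain_disj f j.+1 n')
  end.

Definition Bm_axiom (m : nat) (f : nat -> pform) : pform := chain_disj f 1 m.

Inductive LCm_thm (m : nat) : pform -> Prop :=
| ip_k A B : LCm_thm m (pimp A (pimp B A))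
| ip_s A B C : LCm_thm m (pimp (pimp A (pimp B C)) (pimp (pimp A B) (pimp A C)))
| ip_andE1 A B : LCm_thm m (pimp (pand A B) A)
| ip_andE2 A B : LCm_thm m (pimp (pand A B) B)
| ip_andI A B : LCm_thm m (pimp A (pimp B (pand A B)))
| ip_orI1 A B : LCm_thm m (pimp A (por A B))
| ip_orI2 A B : LCm_thm m (pimp B (por A B))
| ip_orE A B C : LCm_thm m (pimp (pimp A C) (pimp (pimp B C) (pimp (por A B) C)))
| ip_efq A : LCm_thm m (pimp pbot A)
| lc_lin A B : LCm_thm m (por (pimp A B) (pimp B A))
| lc_Bm f : LCm_thm m (Bm_axiom m f)
| lc_mp A B : LCm_thm m (pimp A B) -> LCm_thm m A -> LCm_thm m B.

(* Free variables are named
   (tvar x), variables bound by eps/tau are de Bruijn indices (tbvar i);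
   teps A stands for  eps x A(x)  where A(x) is A with index 0 read as x. *)

Section Syntax.
Variables (F Pr : Type) (arF : F -> nat) (arP : Pr -> nat).

Inductive term : Type :=
| tvar : nat -> term
| tbvar : nat -> term
| tapp : F -> seq term -> term
| teps : formula -> term
| ttau : formula -> term
with formula : Type :=
| fatom : Pr -> seq term -> formula
| fbot : formula
| fimp : formula -> formula -> formula
| fand : formula -> formula -> formula
| f_or : formula -> formula -> formula.

Fixpoint wf_term (k : nat) (t : term) : bool :=
  match t with
  | tvar _ => true
  | tbvar i => i < k
  | tapp f ts => (size ts == arF f) && all (wf_term k) ts
  | teps A => wf_form k.+1 A
  | ttau A => wf_form k.+1 A
  end
with wf_form (k : nat) (A : formula) : bool :=
  match A with
  | fatom P ts => (size ts == arP P) && all (wf_term k) ts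
  | fbot => true
  | fimp A B => wf_form k A && wf_form k B
  | fand A B => wf_form k A && wf_form k B
  | f_or A B => wf_form k A && wf_form k B
  end.

Fixpoint etfree_term (t : term) : bool :=
  match t with
  | tvar _ => true
  | tbvar _ => true
  | tapp _ ts => all etfree_term ts
  | teps _ => false
  | ttau _ => false
  end
with etfree_form (A : formula) : bool :=
  match A with
  | fatom _ ts => all etfree_term ts
  | fbot => true
  | fimp A B => etfree_form A && etfree_form B
  | fand A B => etfree_form A && etfree_form B
  | f_or A B => etfree_form A && etfree_form B
  end.

(* opening: replace bound index k by the (closed-for-indices) term u *)
Fixpoint open_term (k : nat) (u : term) (t : term) : term :=
  match t with
  | tvar x => tvar x
  | tbvar i => if i == k then u else tbvar i
  | tapp f ts => tapp f (map (open_term k u) ts)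
  | teps A => teps (open_form k.+1 u A)
  | ttau A => ttau (open_form k.+1 u A)
  end
with open_form (k : nat) (u : term) (A : formula) : formula :=
  match A with
  | fatom P ts => fatom P (map (open_term k u) ts)
  | fbot => fbot
  | fimp A B => fimp (open_form k u A) (open_form k u B)
  | fand A B => fand (open_form k u A) (open_form k u B)
  | f_or A B => f_or (open_form k u A) (open_form k u B)
  end.

Definition inst (A : formula) (t : term) : formula := open_form 0 t A.

Fixpoint subst_term (s : nat -> term) (t : term) : term :=
  match t with
  | tvar x => s x
  | tbvar i => tbvar i
  | tapp f ts => tapp f (map (subst_term s) ts)
  | teps A => teps (subst_form s A)
  | ttau A => ttau (subst_form s A)
  end
with subst_form (s : nat -> term) (A : formula) : formula :=
  match A with
  | fatom P ts => fatom P (map (subst_term s) ts)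
  | fbot => fbot
  | fimp A B => fimp (subst_form s A) (subst_form s B)
  | fand A B => fand (subst_form s A) (subst_form s B)
  | f_or A B => f_or (subst_form s A) (subst_form s B)
  end.

Fixpoint pinst (s : nat -> formula) (P : pform) : formula :=
  match P with
  | pvar p => s p
  | pbot => fbot
  | pimp A B => fimp (pinst s A) (pinst s B)
  | pand A B => fand (pinst s A) (pinst s B)
  | por A B => f_or (pinst s A) (pinst s B)
  end.

Inductive deriv (crit : bool) (m : nat) : formula -> Prop :=
| d_inst (P : pform) (s : nat -> formula) :
    LCm_thm m P -> (forall p, wf_form 0 (s p)) -> deriv crit m (pinst s P)
| d_crit_eps (A : formula) (t : term) :
    crit -> wf_form 1 A -> wf_term 0 t ->
    deriv crit m (fimp (inst A t) (inst A (teps A)))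
| d_crit_tau (A : formula) (t : term) :
    crit -> wf_form 1 A -> wf_term 0 t ->
    deriv crit m (fimp (inst A (ttau A)) (inst A t))
| d_mp (A B : formula) :
    deriv crit m (fimp A B) -> deriv crit m A -> deriv crit m B.

Definition prov_et (m : nat) (A : formula) : Prop := deriv true m A.
Definition prov_L (m : nat) (A : formula) : Prop := deriv false m A.

Definition is_epstau (t : term) : bool :=
  match t with teps _ => true | ttau _ => true | _ => false end.

Definition subst_list (xs : seq nat) (es : seq term) : nat -> term :=
  fun v => if v \in xs then nth (tvar v) es (index v xs) else tvar v.

(* B_1 \/ ... \/ B_k (right nested), for a nonempty list *)
Fixpoint bigor (l : seq formula) : formula :=
  match l with
  | [::] => fbot
  | a :: l' => if l' is [::] then a else f_or a (bigor l')
  end.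

Definition first_et_theorem (m : nat) : Prop :=
  forall (A : formula) (xs : seq nat) (es : seq term),
    wf_form 0 A -> etfree_form A -> uniq xs -> size es = size xs ->
    all (fun e => is_epstau e && wf_term 0 e) es ->
    prov_et m (subst_form (subst_list xs es) A) ->
    exists tss : seq (seq term),
      0 < size tss /\
      all (fun ts => (size ts == size xs) &&
                     all (fun t => etfree_term t && wf_term 0 t) ts) tss /\
      prov_L m (bigor [seq subst_form (subst_list xs ts) A | ts <- tss]).

End Syntax.

(* Suppose no Herbrand disjunction A(t^1) \/ ... \/ A(t^k), with eps-tau-free
   t^j, is provable in LC_m. These disjunctions are directed under provable
   implication, so Zorn's lemma gives a prime theory T that contains LC_m and
   none of them. For a family B(u) indexed by the closed eps-tau-free terms u,
   primeness and B_m exclude chains of m+1 steps none of whose implications lie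
   in T; hence the family has a T-greatest and a T-least member. Interpreting
   eps x B(x) by a T-greatest and tau x B(x) by a T-least witness, recursively,
   turns every critical formula into an implication in T, so every
   eps-tau-provable formula is interpreted in T. For A(e_1, ..., e_n) the
   interpretation is an instance A(t_1, ..., t_n), a contradiction. *)

From mathcomp Require Import all_boot.
From mathcomp Require Import boolp classical_sets zify.
Require Stdlib.Lists.List.

Set Implicit Arguments. Unset Strict Implicit. Unset Printing Implicit Defensive.
Local Open Scope classical_set_scope.

Section FirstEpsTauTheorem.
Variables (F Pr : Type) (arF : F -> nat) (arP : Pr -> nat).
Local Notation term := (term F Pr).
Local Notation formula := (formula F Pr).
Local Notation wft := (wf_term arF arP).
Local Notation wff := (wf_form arF arP).

Section TermFormulaInd.
Variables (Pt : term -> Prop) (Pf : formula -> Prop).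
Hypotheses
  (Hvar : forall x, Pt (tvar F Pr x))
  (Hbvar : forall i, Pt (tbvar F Pr i))
  (Happ : forall f ts, (forall t, List.In t ts -> Pt t) -> Pt (tapp f ts))
  (Heps : forall A, Pf A -> Pt (teps A))
  (Htau : forall A, Pf A -> Pt (ttau A))
  (Hatom : forall P ts, (forall t, List.In t ts -> Pt t) -> Pf (fatom P ts))
  (Hbot : Pf (fbot F Pr))
  (Himp : forall A B, Pf A -> Pf B -> Pf (fimp A B))
  (Hand : forall A B, Pf A -> Pf B -> Pf (fand A B))
  (Hor : forall A B, Pf A -> Pf B -> Pf (f_or A B)).

Fixpoint term_ind' (t : term) : Pt t :=
  match t with
  | tvar x => Hvar x
  | tbvar i => Hbvar i
  | tapp f ts => Happ f ((fix terms_ind (l : seq term) : forall u, List.In u l -> Pt u :=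
       match l with
       | [::] => fun u (absurd : False) => match absurd with end
       | v :: l' => fun u inl => match inl with
                    | or_introl e => eq_ind v Pt (term_ind' v) u e
                    | or_intror inl' => terms_ind l' u inl' end
       end) ts)
  | teps A => Heps (formula_ind' A)
  | ttau A => Htau (formula_ind' A)
  end
with formula_ind' (A : formula) : Pf A :=
  match A with
  | fatom P ts => Hatom P ((fix terms_ind (l : seq term) : forall u, List.In u l -> Pt u :=
       match l with
       | [::] => fun u (absurd : False) => match absurd with end
       | v :: l' => fun u inl => match inl with
                    | or_introl e => eq_ind v Pt (term_ind' v) u e
                    | or_intror inl' => terms_ind l' u inl' end
       end) ts)
  | fbot => Hbot
  | fimp A B => Himp (formula_ind' A) (formula_ind' B)
  | fand A B => Hand (formula_ind' A) (formula_ind' B)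
  | f_or A B => Hor (formula_ind' A) (formula_ind' B)
  end.

Lemma term_formula_ind : (forall t, Pt t) /\ (forall A, Pf A).
Proof. by split; [exact: term_ind' | exact: formula_ind']. Qed.

End TermFormulaInd.

Definition etfree_wf (u : term) : bool := etfree_term u && wft 0 u.

Definition scons (u : term) (r : nat -> term) : nat -> term :=
  fun i => if i is j.+1 then r j else u.

Section Evaluation.
Variables eps_val tau_val : (term -> formula) -> term.

Fixpoint eval_term (r : nat -> term) (t : term) {struct t} : term :=
  match t with
  | tvar x => tvar F Pr x
  | tbvar i => r i
  | tapp f ts => tapp f (map (eval_term r) ts)
  | teps A => eps_val (fun u => eval_form (scons u r) A)
  | ttau A => tau_val (fun u => eval_form (scons u r) A)
  end
with eval_form (r : nat -> term) (A : formula) {struct A} : formula :=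
  match A with
  | fatom P ts => fatom P (map (eval_term r) ts)
  | fbot => fbot F Pr
  | fimp A B => fimp (eval_form r A) (eval_form r B)
  | fand A B => fand (eval_form r A) (eval_form r B)
  | f_or A B => f_or (eval_form r A) (eval_form r B)
  end.

(* [all], [map] and [++] on [seq] are convertible to List.forallb, List.map and
   List.app, so the Stdlib lemmas about List.In apply to them. *)
Lemma eval_env :
  (forall t n r r', wft n t -> (forall i, i < n -> r i = r' i) ->
     eval_term r t = eval_term r' t) /\
  (forall A n r r', wff n A -> (forall i, i < n -> r i = r' i) ->
     eval_form r A = eval_form r' A).
Proof.
apply: term_formula_ind => //=; last 3 first.
1-3: by move=> A B IHA IHB n r r' /andP[wA wB] rr'; rewrite (IHA n r r') ?(IHB n r r').
- by move=> i n r r' /[swap]; apply.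
- move=> f ts IH n r r' /andP[_ /List.forallb_forall wts] rr'; congr tapp.
  by apply: List.map_ext_in => t tin; apply: (IH t tin n) => //; exact: wts.
- move=> A IH n r r' wA rr'; congr eps_val; apply: funext => u.
  by apply: (IH n.+1) => // -[|i] //= /rr'.
- move=> A IH n r r' wA rr'; congr tau_val; apply: funext => u.
  by apply: (IH n.+1) => // -[|i] //= /rr'.
- move=> P ts IH n r r' /andP[_ /List.forallb_forall wts] rr'; congr fatom.
  by apply: List.map_ext_in => t tin; apply: (IH t tin n) => //; exact: wts.
Qed.

Lemma eval_closed t r r' : wft 0 t -> eval_term r t = eval_term r' t.
Proof. by move=> wt; apply: (eval_env.1 t 0). Qed.

Lemma eval_open u v : (forall r, eval_term r u = v) ->
  (forall t k r, eval_term r (open_term k u t) = eval_term [eta r with k |-> v] t) /\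
  (forall A k r, eval_form r (open_form k u A) = eval_form [eta r with k |-> v] A).
Proof.
move=> uv; apply: term_formula_ind => //=; last 3 first.
1-3: by move=> A B IHA IHB k r; rewrite IHA IHB.
- by move=> i k r; case: eqP.
- move=> f ts IH k r; congr tapp; rewrite -map_comp.
  by apply: List.map_ext_in => t tin; exact: IH.
- move=> A IH k r; congr eps_val; apply: funext => w; rewrite IH.
  by congr eval_form; apply: funext => -[|i].
- move=> A IH k r; congr tau_val; apply: funext => w; rewrite IH.
  by congr eval_form; apply: funext => -[|i].
- move=> P ts IH k r; congr fatom; rewrite -map_comp.
  by apply: List.map_ext_in => t tin; exact: IH.
Qed.

Lemma eval_inst A t r : wff 1 A -> wft 0 t ->
  eval_form r (inst A t) = eval_form (scons (eval_term r t) r) A.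
Proof.
move=> wA wt; rewrite /inst (eval_open (fun r' => eval_closed r' r wt)).2.
by apply: (eval_env.2 A 1) => // -[].
Qed.

Lemma eval_pinst r s P : eval_form r (pinst s P) = pinst (eval_form r \o s) P.
Proof. by elim: P => //= A IHA B IHB; rewrite IHA IHB. Qed.

Lemma eval_subst r s :
  (forall t, etfree_term t -> wft 0 t ->
     eval_term r (subst_term s t) = subst_term (eval_term r \o s) t) /\
  (forall A, etfree_form A -> wff 0 A ->
     eval_form r (subst_form s A) = subst_form (eval_term r \o s) A).
Proof.
apply: term_formula_ind => //=; last 3 first.
1-3: by move=> A B IHA IHB /andP[eA eB] /andP[wA wB]; rewrite IHA ?IHB.
- move=> f ts IH /List.forallb_forall ets /andP[_ /List.forallb_forall wts].
  congr tapp; rewrite -map_comp.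
  by apply: List.map_ext_in => t tin; apply: IH; [|exact: ets|exact: wts].
- move=> P ts IH /List.forallb_forall ets /andP[_ /List.forallb_forall wts].
  congr fatom; rewrite -map_comp.
  by apply: List.map_ext_in => t tin; apply: IH; [|exact: ets|exact: wts].
Qed.

Lemma eval_subst_list r xs es :
  eval_term r \o subst_list xs es =1 subst_list xs (map (eval_term r) es).
Proof.
move=> v; rewrite /subst_list /=; case: ifP => // _.
by elim: es (index v xs) => [|e es IH] [|i] //=.
Qed.

Section EtfreeValues.
Hypotheses (eps_val_etfree : forall g, etfree_wf (eps_val g))
           (tau_val_etfree : forall g, etfree_wf (tau_val g)).

Lemma eval_etfree_wf :
  (forall t n r, wft n t -> (forall i, etfree_wf (r i)) -> etfree_wf (eval_term r t)) /\
  (forall A n r, wff n A -> (forall i, etfree_wf (r i)) ->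
     etfree_form (eval_form r A) && wff 0 (eval_form r A)).
Proof.
apply: term_formula_ind => //=; last 3 first.
1-3: move=> A B IHA IHB n r /andP[wA wB] Dr;
  by case/andP: (IHA n r wA Dr) => -> ->; case/andP: (IHB n r wB Dr) => -> ->.
- move=> f ts IH n r /andP[/eqP sz /List.forallb_forall wts] Dr.
  have Dts t : List.In t ts -> etfree_wf (eval_term r t).
    by move=> tin; exact: IH tin n r (wts t tin) Dr.
  rewrite /etfree_wf /= size_map sz eqxx /= !all_map.
  by apply/andP; split; apply/List.forallb_forall => t /Dts /andP[].
- move=> P ts IH n r /andP[/eqP sz /List.forallb_forall wts] Dr.
  have Dts t : List.In t ts -> etfree_wf (eval_term r t).
    by move=> tin; exact: IH tin n r (wts t tin) Dr.
  rewrite /= size_map sz eqxx /= !all_map.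
  by apply/andP; split; apply/List.forallb_forall => t /Dts /andP[].
Qed.

Lemma eval_body_wf A r : wff 1 A -> (forall i, etfree_wf (r i)) ->
  forall u, etfree_wf u -> wff 0 (eval_form (scons u r) A).
Proof.
move=> wA Dr u Du.
by case/andP: (eval_etfree_wf.2 A 1 (scons u r) wA (fun i => if i is j.+1 then Dr j else Du)).
Qed.

End EtfreeValues.

End Evaluation.

Lemma wf_bigor l : 0 < size l -> wff 0 (bigor l) = all (wff 0) l.
Proof. by elim: l => // A [|B l] IH _ /=; rewrite ?andbT // IH. Qed.

Lemma prov_wf m B : deriv arF arP false m B -> wff 0 B.
Proof.
elim=> {B} [P s _ ws | // | // | A B _ /andP[] //].
by elim: P => //= A IHA B IHB; rewrite IHA IHB.
Qed.

Section Hilbert.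
Variables (b : bool) (m : nat).
Local Notation prov := (deriv arF arP b m).

Lemma prov_thm P (l : seq formula) : LCm_thm m P -> all (wff 0) l ->
  prov (pinst (nth (fbot F Pr) l) P).
Proof.
move=> HP wl; apply: d_inst => // p.
by elim: l p wl => [|A l IH] [|p] //= /andP[wA wl]; last exact: IH.
Qed.

Section Schemas.
Variables (A B C : formula) (wA : wff 0 A) (wB : wff 0 B) (wC : wff 0 C).

Lemma provK : prov (fimp A (fimp B A)).
Proof. by apply: (prov_thm (ip_k m (pvar 0) (pvar 1)) (l := [:: A; B])); rewrite /= wA wB. Qed.

Lemma provS : prov (fimp (fimp A (fimp B C)) (fimp (fimp A B) (fimp A C))).
Proof.
apply: (prov_thm (ip_s m (pvar 0) (pvar 1) (pvar 2)) (l := [:: A; B; C])).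
by rewrite /= wA wB wC.
Qed.

Lemma prov_orIl : prov (fimp A (f_or A B)).
Proof. by apply: (prov_thm (ip_orI1 m (pvar 0) (pvar 1)) (l := [:: A; B])); rewrite /= wA wB. Qed.

Lemma prov_orIr : prov (fimp B (f_or A B)).
Proof. by apply: (prov_thm (ip_orI2 m (pvar 0) (pvar 1)) (l := [:: A; B])); rewrite /= wA wB. Qed.

Lemma prov_orE : prov (fimp (fimp A C) (fimp (fimp B C) (fimp (f_or A B) C))).
Proof.
apply: (prov_thm (ip_orE m (pvar 0) (pvar 1) (pvar 2)) (l := [:: A; B; C])).
by rewrite /= wA wB wC.
Qed.

End Schemas.

Lemma provI A : wff 0 A -> prov (fimp A A).
Proof.
move=> wA; have wAA : wff 0 (fimp A A) by rewrite /= wA.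
exact: d_mp (d_mp (provS wA wAA wA) (provK wA wAA)) (provK wA wA).
Qed.

Lemma prov_trans A B C : wff 0 A -> wff 0 B -> wff 0 C ->
  prov (fimp A B) -> prov (fimp B C) -> prov (fimp A C).
Proof.
move=> wA wB wC AB BC; have wBC : wff 0 (fimp B C) by rewrite /= wB wC.
exact: d_mp (d_mp (provS wA wB wC) (d_mp (provK wBC wA) BC)) AB.
Qed.

Lemma prov_bigor_intro l A : all (wff 0) l -> List.In A l -> prov (fimp A (bigor l)).
Proof.
elim: l => // B l IH /andP[wB wl] BAl.
case: l => [|C l] in IH wl BAl *; first by case: BAl => [<-|//]; exact: provI.
have wCl : wff 0 (bigor (C :: l)) by rewrite wf_bigor.
case: BAl => [<- | Al]; first exact: prov_orIl wB wCl.
have wA : wff 0 A := proj1 (List.forallb_forall (wff 0) (C :: l)) wl A Al.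
by apply: (prov_trans wA wCl) (IH wl Al) (prov_orIr wB wCl); rewrite /= wB.
Qed.

Lemma prov_bigor_elim l C : 0 < size l -> all (wff 0) l -> wff 0 C ->
  (forall A, List.In A l -> prov (fimp A C)) -> prov (fimp (bigor l) C).
Proof.
elim: l => // B l IH _ /andP[wB wl] wC AC.
case: l IH wl AC => [|D l] IH wl AC; first by apply: AC; left.
have wDl : wff 0 (bigor (D :: l)) by rewrite wf_bigor.
apply: d_mp (d_mp (prov_orE wB wDl wC) (AC B (or_introl erefl))) _.
by apply: IH => // A Al; apply: AC; right.
Qed.

Lemma prov_bigor_incl l1 l2 : 0 < size l1 -> all (wff 0) l2 -> List.incl l1 l2 ->
  prov (fimp (bigor l1) (bigor l2)).
Proof.
move=> l1_gt0 wl2 l12; have l2_gt0 : 0 < size l2.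
  by case: l1 l1_gt0 l12 => // A l1 _ /(_ A (or_introl erefl)); case: l2 {wl2}.
have wA A : List.In A l2 -> wff 0 A := proj1 (List.forallb_forall (wff 0) l2) wl2 A.
apply: prov_bigor_elim; rewrite ?wf_bigor //.
  by apply/List.forallb_forall => A /l12 /wA.
by move=> A /l12 Al2; apply: prov_bigor_intro.
Qed.

End Hilbert.

Lemma exists_selector (Q : (term -> formula) -> term -> Prop) :
  (forall g, (forall u, etfree_wf u -> wff 0 (g u)) -> exists2 w, etfree_wf w & Q g w) ->
  exists sel, forall g, etfree_wf (sel g) /\
    ((forall u, etfree_wf u -> wff 0 (g u)) -> Q g (sel g)).
Proof.
move=> exQ; have /choice[sel selP] : forall g, exists w, etfree_wf w /\
    ((forall u, etfree_wf u -> wff 0 (g u)) -> Q g w).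
  move=> g; case: (pselect (forall u, etfree_wf u -> wff 0 (g u))) => [/exQ[w Dw Qw] | nwf].
    by exists w.
  by exists (tvar F Pr 0); split => // /nwf.
by exists sel.
Qed.

Section Theories.
Variable m : nat.
Local Notation PL := (deriv arF arP false m).

Definition theory (T : formula -> Prop) :=
  [/\ forall B, T B -> wff 0 B, PL `<=` T & forall B C, T (fimp B C) -> T B -> T C].

Definition avoids (Phi T : formula -> Prop) := forall B, Phi B -> ~ T B.

Definition maximal_avoiding (Phi T : formula -> Prop) :=
  [/\ theory T, avoids Phi T & forall Y, theory Y -> T `<` Y -> ~ avoids Phi Y].

Definition prime_theory (T : formula -> Prop) :=
  theory T /\ forall B C, wff 0 B -> wff 0 C -> T (f_or B C) -> T B \/ T C.

Definition directed (Phi : formula -> Prop) :=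
  forall B C, Phi B -> Phi C -> wff 0 B -> wff 0 C ->
  exists2 D, Phi D & PL (fimp B D) /\ PL (fimp C D).

Section Theory.
Variable T : formula -> Prop.
Hypothesis thT : theory T.

Lemma theory_wf B : T B -> wff 0 B. Proof. by case: thT => + _ _; apply. Qed.
Lemma theory_prov B : PL B -> T B. Proof. by case: thT => _ + _; apply. Qed.
Lemma theory_mp B C : T (fimp B C) -> T B -> T C. Proof. by case: thT => _ _; apply. Qed.

Lemma theory_K B C : wff 0 B -> T C -> T (fimp B C).
Proof.
move=> wB TC; have wC := theory_wf TC.
by apply: theory_mp TC; apply: theory_prov; exact: provK.
Qed.

Lemma theory_S B C E : T (fimp B (fimp C E)) -> T (fimp B C) -> T (fimp B E).
Proof.
move=> TBCE TBC; have /andP[wB /andP[wC wE]] := theory_wf TBCE.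
by apply: theory_mp TBC; apply: theory_mp TBCE; apply: theory_prov; exact: provS.
Qed.

Lemma theory_trans B C E : T (fimp B C) -> T (fimp C E) -> T (fimp B E).
Proof.
move=> TBC TCE; have /andP[wB _] := theory_wf TBC.
by apply: theory_S TBC; apply: theory_K.
Qed.

End Theory.

Lemma theory_chain_union (G : set (set formula)) : total_on G subset ->
  (forall X, G X -> theory (X `|` PL)) -> theory (\bigcup_(X in G) X `|` PL).
Proof.
move=> totG thG; have lift X B : G X -> (X `|` PL) B -> (\bigcup_(X in G) X `|` PL) B.
  by move=> GX [XB | PB]; [left; exists X | right].
have mp X B C : G X -> (X `|` PL) (fimp B C) -> (X `|` PL) B -> (\bigcup_(X in G) X `|` PL) C.
  by move=> GX XBC XB; apply: (lift X C GX (theory_mp (thG X GX) XBC XB)).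
split.
- move=> B [[X GX XB] | PB]; last exact: prov_wf PB.
  by apply: (theory_wf (thG X GX)); left.
- by move=> B PB; right.
- move=> B C [[X GX XBC] | PBC] [[Y GY YB] | PB].
  + have [XY | YX] := totG X Y GX GY.
      by apply: (mp Y B C GY); left; [exact: XY _ XBC | exact: YB].
    by apply: (mp X B C GX); left; [exact: XBC | exact: YX _ YB].
  + by apply: (mp X B C GX); [left | right].
  + by apply: (mp Y B C GY); [right | left].
  + by right; exact: d_mp PBC PB.
Qed.

Lemma lindenbaum Phi : avoids Phi PL -> exists T, maximal_avoiding Phi T.
Proof.
move=> avPL.
have [|X [[thX avX] Xmax]] :=
  Zorn_bigcup (P := fun X => theory (X `|` PL) /\ avoids Phi (X `|` PL)).
- move=> G GP totG; split; first by apply: theory_chain_union => // X /GP[].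
  move=> B PhiB [[X GX XB] | PB]; last exact: avPL PhiB PB.
  exact: (GP X GX).2 B PhiB (or_introl XB).
- exists (X `|` PL); split=> // Y thY [XY YX] avY.
  have YPL : Y `|` PL = Y by apply/setUidPl; case: thY.
  apply: (Xmax Y); last by rewrite YPL.
  by split=> [B XB | YsubX]; [apply: XY; left | apply: YX => B /YsubX; left].
Qed.

Lemma maximal_avoiding_complete Phi T : maximal_avoiding Phi T ->
  forall B, wff 0 B -> ~ T B -> exists2 D, Phi D & T (fimp B D).
Proof.
case=> thT avT Tmax B wB nTB.
pose Y := [set E | wff 0 E /\ T (fimp B E)].
have thY : theory Y.
  split=> [E [] // | E PE | C E [wCE TBCE] [wC TBC]].
  - by split; [exact: prov_wf PE | apply: (theory_K thT) => //; exact: (theory_prov thT PE)].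
  - by split; [case/andP: wCE | exact: (theory_S thT TBCE TBC)].
have TY : T `<` Y.
  split=> [E TE | YT]; first by split; [exact: (theory_wf thT TE) | apply: (theory_K thT)].
  by apply: nTB; apply: YT; split=> //; apply: (theory_prov thT); exact: provI.
apply: contrapT => noD; apply: (Tmax Y thY TY) => D PhiD [_ TBD].
by apply: noD; exists D.
Qed.

Lemma maximal_avoiding_prime Phi T : directed Phi -> maximal_avoiding Phi T ->
  prime_theory T.
Proof.
move=> dirPhi maxT; have [thT avT _] := maxT; split=> // B C wB wC TBC.
apply: contrapT => /not_orP[nTB nTC].
have [D1 PhiD1 TBD1] := maximal_avoiding_complete maxT wB nTB.
have [D2 PhiD2 TCD2] := maximal_avoiding_complete maxT wC nTC.
have /andP[_ wD1] := theory_wf thT TBD1; have /andP[_ wD2] := theory_wf thT TCD2.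
have [D PhiD [D1D D2D]] := dirPhi D1 D2 PhiD1 PhiD2 wD1 wD2.
have TBD := theory_trans thT TBD1 (theory_prov thT D1D).
have TCD := theory_trans thT TCD2 (theory_prov thT D2D).
have /andP[_ wD] := theory_wf thT TBD.
apply: (avT D PhiD); apply: (theory_mp thT _ TBC).
apply: (theory_mp thT _ TCD); apply: (theory_mp thT _ TBD).
by apply: (theory_prov thT); exact: prov_orE.
Qed.

Section PrimeTheory.
Variable T : formula -> Prop.
Hypothesis primeT : prime_theory T.

Lemma prime_theory_chain_disj s : (forall p, wff 0 (s p)) -> forall n j, 0 < n ->
  T (pinst s (chain_disj pvar j n)) -> exists2 i, j <= i < j + n & T (fimp (s i) (s i.+1)).
Proof.
have [_ primeP] := primeT; move=> ws; elim=> // n IH j _.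
case: n IH => [_ Tj | n IH]; first by exists j => //; lia.
have wj : wff 0 (fimp (s j) (s j.+1)) by rewrite /= !ws.
have wn : wff 0 (pinst s (chain_disj pvar j.+1 n.+1)).
  by elim: (chain_disj _ _ _) => //= A IHA B IHB; rewrite IHA IHB.
case/(primeP _ _ wj wn) => [Tj | /(IH j.+1 isT)[i /andP[ji ijn] Ti]].
  by exists j => //; lia.
by exists i => //; lia.
Qed.

Hypothesis m_gt0 : 0 < m.

Lemma prime_theory_Bm s : (forall p, wff 0 (s p)) ->
  exists2 i, 0 < i <= m & T (fimp (s i) (s i.+1)).
Proof.
move=> ws; have [thT _] := primeT.
have TBm : T (pinst s (Bm_axiom m pvar)).
  by apply: (theory_prov thT); apply: d_inst => //; exact: lc_Bm.
by have [i] := prime_theory_chain_disj ws m_gt0 TBm; exists i.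
Qed.

Lemma prime_theory_greatest (I : Type) (S : I -> Prop) (g : I -> formula) i0 :
  S i0 -> (forall i, S i -> wff 0 (g i)) ->
  exists2 w, S w & forall u, S u -> T (fimp (g u) (g w)).
Proof.
move=> Si0 wg; apply: contrapT => nomax.
have /choice[f fP] : forall w, exists w', S w -> S w' /\ ~ T (fimp (g w') (g w)).
  move=> w; case: (pselect (S w)) => Sw; last by exists w.
  apply: contrapT => noabove; apply: nomax; exists w => // u Su.
  by apply: contrapT => nTu; apply: noabove; exists u.
pose h i := iter i f i0; have Sh i : S (h i) by elim: i => //= i /fP[].
have [i /andP[_ i_le_m]] :=
  prime_theory_Bm (s := fun p => g (h (m.+1 - p))) (fun p => wg _ (Sh _)).
by rewrite subSS subSn //; apply: (fP _ (Sh (m - i))).2.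
Qed.

Lemma prime_theory_least (I : Type) (S : I -> Prop) (g : I -> formula) i0 :
  S i0 -> (forall i, S i -> wff 0 (g i)) ->
  exists2 w, S w & forall u, S u -> T (fimp (g w) (g u)).
Proof.
move=> Si0 wg; apply: contrapT => nomin.
have /choice[f fP] : forall w, exists w', S w -> S w' /\ ~ T (fimp (g w) (g w')).
  move=> w; case: (pselect (S w)) => Sw; last by exists w.
  apply: contrapT => nobelow; apply: nomin; exists w => // u Su.
  by apply: contrapT => nTu; apply: nobelow; exists u.
pose h i := iter i f i0; have Sh i : S (h i) by elim: i => //= i /fP[].
have [i _] := prime_theory_Bm (s := fun p => g (h p)) (fun p => wg _ (Sh _)).
exact: (fP _ (Sh i)).2.
Qed.

End PrimeTheory.

Section Soundness.
Variables (T : formula -> Prop) (eps_val tau_val : (term -> formula) -> term).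
Hypotheses (thT : theory T)
  (eps_val_etfree : forall g, etfree_wf (eps_val g))
  (tau_val_etfree : forall g, etfree_wf (tau_val g))
  (eps_val_greatest : forall g, (forall u, etfree_wf u -> wff 0 (g u)) ->
     forall u, etfree_wf u -> T (fimp (g u) (g (eps_val g))))
  (tau_val_least : forall g, (forall u, etfree_wf u -> wff 0 (g u)) ->
     forall u, etfree_wf u -> T (fimp (g (tau_val g)) (g u))).

Lemma eval_sound r : (forall i, etfree_wf (r i)) ->
  forall B, prov_et arF arP m B -> T (eval_form eps_val tau_val r B).
Proof.
have evalD := eval_etfree_wf eps_val_etfree tau_val_etfree.
move=> Dr B; elim=> {B} [P s HP ws | A t _ wA wt | A t _ wA wt | B C _ TBC _ TB].
- rewrite eval_pinst; apply: (theory_prov thT); apply: d_inst => // p.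
  by case/andP: (evalD.2 _ 0 r (ws p) Dr).
- rewrite /= !eval_inst //=.
  exact: eps_val_greatest (eval_body_wf _ _ wA Dr) _ (evalD.1 t 0 r wt Dr).
- rewrite /= !eval_inst //=.
  exact: tau_val_least (eval_body_wf _ _ wA Dr) _ (evalD.1 t 0 r wt Dr).
- exact: (theory_mp thT TBC TB).
Qed.

End Soundness.

Section Herbrand.
Variables (xs : seq nat) (A0 : formula).

Definition herbrand_tuple (ts : seq term) : bool :=
  (size ts == size xs) && all etfree_wf ts.

Definition herbrand_instances (tss : seq (seq term)) : seq formula :=
  [seq subst_form (subst_list xs ts) A0 | ts <- tss].

Definition herbrand_disj (B : formula) : Prop :=
  exists tss, [/\ 0 < size tss, all herbrand_tuple tss & B = bigor (herbrand_instances tss)].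

Lemma herbrand_disj_directed : directed herbrand_disj.
Proof.
move=> _ _ [tss1 [tss1_gt0 h1 ->]] [tss2 [tss2_gt0 h2 ->]].
rewrite !wf_bigor ?size_map // => wl1 wl2.
exists (bigor (herbrand_instances (tss1 ++ tss2))).
  by exists (tss1 ++ tss2); rewrite size_cat all_cat h1 h2 addn_gt0 tss1_gt0.
have wl12 : all (wff 0) (herbrand_instances tss1 ++ herbrand_instances tss2).
  by rewrite all_cat wl1.
rewrite /herbrand_instances map_cat.
by split; apply: prov_bigor_incl; rewrite ?size_map //;
  [apply: List.incl_appl | apply: List.incl_appr]; apply: List.incl_refl.
Qed.

Lemma herbrand_disj_provable es : 0 < m -> wff 0 A0 -> etfree_form A0 ->
  size es = size xs -> all (wft 0) es ->
  prov_et arF arP m (subst_form (subst_list xs es) A0) -> exists2 B, herbrand_disj B & PL B.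
Proof.
move=> m_gt0 wA0 eA0 ses wes provA; apply: contrapT => noPL.
have [T maxT] := lindenbaum (fun B HB PB => noPL (ex_intro2 _ _ B HB PB)).
have primeT := maximal_avoiding_prime herbrand_disj_directed maxT.
have [thT avT _] := maxT.
have [eps_val eps_valP] := exists_selector (fun g wg =>
  prime_theory_greatest primeT m_gt0 (S := etfree_wf) (i0 := tvar F Pr 0) isT wg).
have [tau_val tau_valP] := exists_selector (fun g wg =>
  prime_theory_least primeT m_gt0 (S := etfree_wf) (i0 := tvar F Pr 0) isT wg).
have eps_valD g := (eps_valP g).1; have tau_valD g := (tau_valP g).1.
pose r (_ : nat) := tvar F Pr 0; have Dr i : etfree_wf (r i) by [].
have := eval_sound thT eps_valD tau_valD (fun g => (eps_valP g).2) (fun g => (tau_valP g).2)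
  Dr provA.
rewrite (eval_subst _ _ _ _).2 // (funext (eval_subst_list _ _ _ _ _)).
apply: avT; exists [:: map (eval_term eps_val tau_val r) es]; split=> //=.
rewrite /herbrand_tuple size_map ses eqxx all_map andbT /=.
by apply: sub_all wes => e we; exact: (eval_etfree_wf eps_valD tau_valD).1 e 0 r we Dr.
Qed.

End Herbrand.

End Theories.
End FirstEpsTauTheorem.

Theorem mainTheorem4 (F Pr : Type) (arF : F -> nat) (arP : Pr -> nat) (m : nat) :
  0 < m -> first_et_theorem arF arP m.
Proof.
move=> m_gt0 A xs es wA eA _ ses wes provA.
have wes' : all (wf_term arF arP 0) es by apply: sub_all wes => e /andP[].
have [_ [tss [tss_gt0 htss ->]] PLB] := herbrand_disj_provable m_gt0 wA eA ses wes' provA.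
by exists tss.
Qed.
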